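(* Let $\bar n_s>0$, $\eta\in[0,1]$, $\bar n_B\ge0$, and $N=(1-\eta)\bar n_B$. Alice prepares a two-mode squeezed vacuum state $\sum_{k\ge0}\sqrt{\frac{\bar n_s^k}{(1+\bar n_s)^{k+1}}}|k\rangle_A|k\rangle_R$ and measures the reference mode $R$ with an on-off detector $c_i$. Under hypothesis $H_1$ the signal mode $A$ is sent through the lossy thermal-noise bosonic channel with transmittance $\eta$ and environment mean photon number $\bar n_B$ and then measured with an on-off detector $c_s$; under $H_0$ the signal is discarded and $c_s$ measures the channel output with vacuum input (a thermal state of mean photon number $N$). Let $p^{m}_{\mathrm{CC}}$ be the probability that both $c_i$ and $c_s$ click under $H_m$. Then $$p^0_{\mathrm{CC}}=\Big(1-\frac{1}{1+\bar n_s}\Big)\Big(1-\frac{1}{1+N}\Big),\qquad p^1_{\mathrm{CC}}\ge\Big(1-\frac{1}{1+\bar n_s}\Big)\Big(1-\frac{1}{1+N}+\frac{\eta}{(1+N)^2}\Big).$$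
   Context: An on-off detector clicks on a single-mode state $\hat\rho$ with probability $1-\langle0|\hat\rho|0\rangle$ and, upon clicking, projects onto the span of Fock states $|k\rangle$, $k\ge1$. The lossy thermal-noise bosonic channel with transmittance $\eta$ and environment mean photon number $\bar n_B$ is a beamsplitter of transmittance $\eta$ mixing the input mode with an environment mode in the thermal state $\sum_{k\ge0}\frac{\bar n_B^k}{(1+\bar n_B)^{k+1}}|k\rangle\langle k|$, with the environment output traced out. *)

(* concrete reals R, with Coquelicot's total [Series] for
   infinite sums.  Everything is written in the Fock (number) basis; all
   matrix elements involved are real (real beamsplitter convention). *)
From Stdlib Require Import Reals Arith.
From Coquelicot Require Import Coquelicot.
Open Scope R_scope.

Definition binom (n k : nat) : R :=
  INR (fact n) / (INR (fact k) * INR (fact (n - k)%nat)).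

(* Fock-basis matrix element <p,q| U_eta |n,m> of the beamsplitter of
   transmittance eta acting on (signal mode, environment mode), with the
   convention  U a^dag U^dag = sqrt eta a^dag + sqrt(1-eta) b^dag,
               U b^dag U^dag = - sqrt(1-eta) a^dag + sqrt eta b^dag. *)
Definition bs (eta : R) (p q n m : nat) : R :=
  if Nat.eqb (p + q)%nat (n + m)%nat then
    sqrt (INR (fact p * fact q)%nat / INR (fact n * fact m)%nat) *
    sum_f_R0 (fun i =>
      if andb (Nat.leb i p) (Nat.leb (p - i)%nat m) then
        binom n i * binom m (p - i)%nat * (-1) ^ (p - i)%nat *
        sqrt eta ^ (i + (m - (p - i)))%nat * sqrt (1 - eta) ^ ((n - i) + (p - i))%nat
      else 0) n
  else 0.

(* Three-mode (R, A, E) real operators given by their Fock matrix elements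
   < r a e | rho | r' a' e' >. *)
Definition Op3 := nat -> nat -> nat -> nat -> nat -> nat -> R.

Definition tmsv_amp (ns : R) (k : nat) : R := sqrt (ns ^ k / (1 + ns) ^ (k + 1)%nat).

(* <r a| psi><psi |r' a'> for psi = sum_k tmsv_amp k |k>_A|k>_R *)
Definition tmsv (ns : R) (r a r' a' : nat) : R :=
  (if Nat.eqb r a then tmsv_amp ns r else 0) *
  (if Nat.eqb r' a' then tmsv_amp ns r' else 0).

Definition thermal (nB : R) (e e' : nat) : R :=
  if Nat.eqb e e' then nB ^ e / (1 + nB) ^ (e + 1)%nat else 0.

Definition vac (a a' : nat) : R :=
  if andb (Nat.eqb a 0) (Nat.eqb a' 0) then 1 else 0.

Definition reduced_R (ns : R) (r r' : nat) : R :=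
  Series (fun a => tmsv ns r a r' a).

Definition init_H1 (ns nB : R) : Op3 :=
  fun r a e r' a' e' => tmsv ns r a r' a' * thermal nB e e'.

Definition init_H0 (ns nB : R) : Op3 :=
  fun r a e r' a' e' => reduced_R ns r r' * vac a a' * thermal nB e e'.

(* (I_R (x) U) rho (I_R (x) U)^dag ; the sums over input photon numbers are
   finite by photon-number conservation of the beamsplitter. *)
Definition apply_bs (eta : R) (rho : Op3) : Op3 :=
  fun r a e r' a' e' =>
    sum_f_R0 (fun n =>
      sum_f_R0 (fun n' =>
        bs eta a e n (a + e - n)%nat * rho r n (a + e - n)%nat r' n' (a' + e' - n')%nat *
        bs eta a' e' n' (a' + e' - n')%nat) (a' + e')%nat) (a + e)%nat.

(* probability that both on-off detectors (on R and on A) click: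
   Tr[(Pi_R (x) Pi_A (x) I_E) rho], Pi = projector onto span{|k>, k>=1};
   the environment E is traced out. *)
Definition p_CC (rho : Op3) : R :=
  Series (fun r => Series (fun a => Series (fun e =>
    if andb (Nat.leb 1 r) (Nat.leb 1 a) then rho r a e r a e else 0))).

(* Under both hypotheses R and A end up in a mixture over the photon number r of R,
   weighted by the thermal distribution of mean ns: the signal mode enters the beamsplitter
   with r photons under H1 and in vacuum under H0.  Given r input photons and a thermal
   environment, photon-number conservation and unitarity of the beamsplitter make the output
   distribution of (A, E) a probability distribution; summing its a = 0 row, a negative
   binomial series, shows that detector c_s stays dark with probability rho^r / (1 + N),
   where rho = (1 - eta) (1 + nB) / (1 + N) lies in [0, 1].  Hence
   p_CC = sum_(r >= 1) P_ns(r) (1 - rho^k / (1 + N)) with k = 0 under H0 and k = r under H1,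
   and rho^r <= rho gives the bound.  Unitarity is checked in the Bargmann picture
   |p, q> = x^p y^q / sqrt (p! q!), where the beamsplitter is an orthogonal change of
   variables and the adjoint of multiplication by s x + t y is s d/dx + t d/dy. *)

From Stdlib Require Import Reals Arith Lra Lia FunctionalExtensionality.
From Coquelicot Require Import Coquelicot.
Open Scope R_scope.

(* Coquelicot states its [sum_n] lemmas over an abstract monoid; restated at type [R], their
   equations become visible to [ring] and [lra]. *)
Lemma sum_n_Rplus (f g : nat -> R) n :
  sum_n (fun i => f i + g i) n = sum_n f n + sum_n g n :> R.
Proof. exact (sum_n_plus f g n). Qed.

Lemma sum_n_Rmult_l (c : R) (f : nat -> R) n :
  sum_n (fun i => c * f i) n = c * sum_n f n :> R.
Proof. exact (sum_n_mult_l c f n). Qed.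

Lemma sum_n_ext_R (f g : nat -> R) n : (forall i, f i = g i) -> sum_n f n = sum_n g n :> R.
Proof. exact (sum_n_ext f g n). Qed.

Lemma sum_n_ext_loc_R (f g : nat -> R) n :
  (forall i, (i <= n)%nat -> f i = g i) -> sum_n f n = sum_n g n :> R.
Proof. exact (sum_n_ext_loc f g n). Qed.

Lemma sum_n_Sn (f : nat -> R) n : sum_n f (S n) = sum_n f n + f (S n) :> R.
Proof. exact (sum_Sn f n). Qed.

Lemma is_series_ext_R (f g : nat -> R) (l : R) :
  (forall n, f n = g n) -> is_series f l -> is_series g l.
Proof. exact (is_series_ext f g l). Qed.

Lemma sum_n_Sn_l (f : nat -> R) n : sum_n f (S n) = f 0%nat + sum_n (fun i => f (S i)) n :> R.
Proof.
  induction n as [|n IH]; rewrite sum_n_Sn.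
  - now rewrite !sum_O.
  - rewrite IH, sum_n_Sn; ring.
Qed.

Lemma sum_n_nonneg (f : nat -> R) n : (forall i, 0 <= f i) -> 0 <= sum_n f n.
Proof.
  intros Hf; induction n as [|n IH]; [rewrite sum_O; apply Hf|].
  rewrite sum_n_Sn; specialize (Hf (S n)); lra.
Qed.

Lemma sum_n_le (f g : nat -> R) n :
  (forall i, (i <= n)%nat -> f i <= g i) -> sum_n f n <= sum_n g n.
Proof.
  induction n as [|n IH]; intros Hfg; [rewrite !sum_O; auto|].
  rewrite !sum_n_Sn; apply Rplus_le_compat; auto.
Qed.

Lemma sum_n_le_mono (f : nat -> R) n m :
  (forall i, 0 <= f i) -> (n <= m)%nat -> sum_n f n <= sum_n f m.
Proof.
  intros Hf Hnm; induction Hnm as [|m _ IH]; [lra|].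
  rewrite sum_n_Sn; specialize (Hf (S m)); lra.
Qed.

Lemma sum_n_ge_term (f : nat -> R) n i :
  (forall i, 0 <= f i) -> (i <= n)%nat -> f i <= sum_n f n.
Proof.
  intros Hf Hi; induction n as [|n IH].
  - replace i with 0%nat by lia; rewrite sum_O; lra.
  - rewrite sum_n_Sn; destruct (Nat.eq_dec i (S n)) as [->|Hne].
    + pose proof (sum_n_nonneg f n Hf); lra.
    + specialize (IH ltac:(lia)); specialize (Hf (S n)); lra.
Qed.

Lemma sum_n_zero (f : nat -> R) n : (forall i, (i <= n)%nat -> f i = 0) -> sum_n f n = 0 :> R.
Proof. intros Hf; rewrite (sum_n_ext_loc_R _ (fun _ => 0)) by auto; rewrite sum_n_const; ring. Qed.

Lemma sum_n_support_le (f : nat -> R) n m :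
  (forall i, (n < i)%nat -> f i = 0) -> (n <= m)%nat -> sum_n f m = sum_n f n :> R.
Proof.
  intros Hf Hnm; induction Hnm as [|m Hnm IH]; [easy|].
  rewrite sum_n_Sn, IH, Hf by lia; ring.
Qed.

Lemma sum_n_single (f : nat -> R) r n :
  (forall i, i <> r -> f i = 0) -> sum_n f n = (if (r <=? n)%nat then f r else 0) :> R.
Proof.
  intros Hf; destruct (Nat.leb_spec r n) as [Hr|Hr].
  - rewrite (sum_n_support_le f r n) by (auto || intros; apply Hf; lia).
    destruct r as [|r]; [now rewrite sum_O|].
    rewrite sum_n_Sn, sum_n_zero by (intros; apply Hf; lia); ring.
  - apply sum_n_zero; intros i Hi; apply Hf; lia.
Qed.

Lemma is_series_partial_le (f : nat -> R) l n :
  (forall i, 0 <= f i) -> is_series f l -> sum_n f n <= l.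
Proof.
  intros Hf Hl; apply is_lim_seq_incr_compare; [exact Hl|].
  intros k; rewrite sum_n_Sn; specialize (Hf (S k)); lra.
Qed.

Lemma ex_series_bounded (f : nat -> R) B :
  (forall i, 0 <= f i) -> (forall n, sum_n f n <= B) -> ex_series f.
Proof.
  intros Hf HB; destruct (ex_finite_lim_seq_incr (sum_n f) B) as [l Hl]; [|exact HB|now exists l].
  intros n; rewrite sum_n_Sn; specialize (Hf (S n)); lra.
Qed.

Lemma is_lim_seq_le_bound (u : nat -> R) (l B : R) :
  is_lim_seq u l -> (forall n, u n <= B) -> l <= B.
Proof.
  intros Hl HB; apply (is_lim_seq_le u (fun _ => B) l B HB Hl).
  apply is_lim_seq_const.
Qed.

Lemma is_series_single (f : nat -> R) r : (forall i, i <> r -> f i = 0) -> is_series f (f r).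
Proof.
  intros Hf; change (is_lim_seq (sum_n f) (f r)).
  apply (is_lim_seq_ext_loc (fun _ => f r)); [|apply is_lim_seq_const].
  exists r; intros n Hn; rewrite (sum_n_single f r) by exact Hf.
  now destruct (Nat.leb_spec r n); [|lia].
Qed.

Lemma is_series_shift (f : nat -> R) l r :
  is_series f l -> is_series (fun M => if (r <=? M)%nat then f (M - r)%nat else 0) l.
Proof.
  intros Hf; induction r as [|r IH].
  - apply (is_series_ext_R f); [intros n; now rewrite Nat.sub_0_r | exact Hf].
  - apply is_series_decr_1; simpl.
    change (plus l (opp 0)) with (l + - 0); rewrite Ropp_0, Rplus_0_r; exact IH.
Qed.

Lemma is_series_tail (f : nat -> R) l :
  is_series f l -> is_series (fun a => if (1 <=? a)%nat then f a else 0) (l - f 0%nat).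
Proof.
  intros Hf; apply is_series_decr_1; simpl.
  change (plus (l - f 0%nat) (opp 0)) with (l - f 0%nat + - 0); rewrite Ropp_0, Rplus_0_r.
  apply is_series_incr_1; change (plus (l - f 0%nat) (f 0%nat)) with (l - f 0%nat + f 0%nat).
  unfold Rminus; rewrite Rplus_assoc, Rplus_opp_l, Rplus_0_r; exact Hf.
Qed.

Lemma Series_if (b : bool) (f : nat -> R) :
  Series (fun e => if b then f e else 0) = if b then Series f else 0.
Proof.
  destruct b; [reflexivity|].
  rewrite (Series_ext _ (fun n => 0 * f n)) by (intros; symmetry; apply Rmult_0_l).
  rewrite Series_scal_l; ring.
Qed.

Definition antidiag_sum (w : nat -> nat -> R) (M : nat) : R := sum_n (fun a => w a (M - a)%nat) M.

Lemma sum_n_antidiag_sum (w : nat -> nat -> R) K :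
  sum_n (antidiag_sum w) K = sum_n (fun a => sum_n (w a) (K - a)%nat) K :> R.
Proof.
  induction K as [|K IH]; [unfold antidiag_sum; now rewrite !sum_O|].
  rewrite sum_n_Sn, IH; unfold antidiag_sum; rewrite !sum_n_Sn, Nat.sub_diag, sum_O.
  rewrite (sum_n_ext_loc_R (fun a => sum_n (w a) (S K - a)) (fun a => sum_n (w a) (K - a) + w a (S (K - a))))
    by (intros a Ha; replace (S K - a)%nat with (S (K - a)) by lia; apply sum_n_Sn).
  rewrite (sum_n_ext_loc_R (fun a => w a (S K - a)%nat) (fun a => w a (S (K - a))))
    by (intros a Ha; f_equal; lia).
  rewrite sum_n_Rplus; ring.
Qed.

Section NonnegDoubleSeries.

Variables (w : nat -> nat -> R) (L : R).
Hypothesis w_nonneg : forall a e, 0 <= w a e.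
Hypothesis antidiag_L : is_series (antidiag_sum w) L.

Lemma sum_n_rows_le A E : sum_n (fun a => sum_n (w a) E) A <= L.
Proof.
  apply Rle_trans with (sum_n (fun a => sum_n (w a) (A + E - a)%nat) (A + E)).
  - apply Rle_trans with (sum_n (fun a => sum_n (w a) (A + E - a)%nat) A).
    + apply sum_n_le; intros a Ha; apply sum_n_le_mono; [auto|lia].
    + apply sum_n_le_mono; [intros; apply sum_n_nonneg; auto | lia].
  - rewrite <- sum_n_antidiag_sum; apply is_series_partial_le; [|exact antidiag_L].
    intros; apply sum_n_nonneg; auto.
Qed.

Lemma ex_series_rows a : ex_series (w a).
Proof.
  apply (ex_series_bounded _ L); [auto|intros E].
  apply Rle_trans with (sum_n (fun a' => sum_n (w a') E) a); [|apply sum_n_rows_le].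
  apply (sum_n_ge_term (fun a' => sum_n (w a') E)); [intros; apply sum_n_nonneg; auto | lia].
Qed.

Lemma is_lim_seq_sum_n_rows A :
  is_lim_seq (fun E => sum_n (fun a => sum_n (w a) E) A) (sum_n (fun a => Series (w a)) A).
Proof.
  induction A as [|A IH].
  - apply (is_lim_seq_ext (sum_n (w 0%nat))); [intros; now rewrite sum_O|].
    rewrite sum_O; apply Series_correct, ex_series_rows.
  - apply (is_lim_seq_ext (fun E => sum_n (fun a => sum_n (w a) E) A + sum_n (w (S A)) E));
      [intros; now rewrite sum_n_Sn|].
    rewrite sum_n_Sn; apply is_lim_seq_plus'; [exact IH|].
    apply Series_correct, ex_series_rows.
Qed.

Lemma is_series_rows : is_series (fun a => Series (w a)) L.
Proof.
  assert (Hrow0 : forall a, 0 <= Series (w a)).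
  { intros a; apply Rle_trans with (sum_n (w a) 0); [apply sum_n_nonneg; auto|].
    apply is_series_partial_le; [auto|apply Series_correct, ex_series_rows]. }
  assert (Hbound : forall A, sum_n (fun a => Series (w a)) A <= L)
    by (intros A; apply (is_lim_seq_le_bound _ _ _ (is_lim_seq_sum_n_rows A)), sum_n_rows_le).
  pose proof (Series_correct _ (ex_series_bounded _ _ Hrow0 Hbound)) as HS.
  replace L with (Series (fun a => Series (w a))); [exact HS|].
  apply Rle_antisym; [exact (is_lim_seq_le_bound _ _ _ HS Hbound)|].
  assert (Hle : Rbar_le L (Series (fun a => Series (w a)))); [|exact Hle].
  apply (is_lim_seq_le (sum_n (antidiag_sum w)) (sum_n (fun a => Series (w a)))); [|exact antidiag_L|exact HS].
  intros K; rewrite sum_n_antidiag_sum; apply sum_n_le; intros a _.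
  apply is_series_partial_le; [auto|apply Series_correct, ex_series_rows].
Qed.

End NonnegDoubleSeries.

(* A homogeneous polynomial of degree [D] in [x, y] is stored as the sequence
   [p |-> coefficient of x^p y^(D-p)], with [D] left implicit: [mulX] and [mul_lin a b] are
   multiplication by [x] and by [a x + b y], [bs_poly s t n m] is (s x + t y)^n (s y - t x)^m,
   the beamsplitter image of [x^n y^m], [lin_adj a b D] is [a d/dx + b d/dy] on degree [D],
   and [fock_dot D] is the inner product for which the [x^p y^(D-p) / sqrt (p! (D-p)!)] are
   orthonormal. *)
Definition mulX (f : nat -> R) (p : nat) : R := match p with O => 0 | S k => f k end.
Definition mul_lin (a b : R) (f : nat -> R) (p : nat) : R := a * mulX f p + b * f p.
Definition delta0 (p : nat) : R := if (p =? 0)%nat then 1 else 0.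
Definition pow_lin (a b : R) (n i : nat) : R :=
  if (i <=? n)%nat then Binomial.C n i * a ^ i * b ^ (n - i) else 0.
Definition conv (f g : nat -> R) (p : nat) : R := sum_n (fun i => f i * g (p - i)%nat) p.
Definition bs_poly (s t : R) (n m : nat) : nat -> R := conv (pow_lin s t n) (pow_lin (- t) s m).
Definition lin_adj (a b : R) (D : nat) (g : nat -> R) (p : nat) : R :=
  a * INR (S p) * g (S p) + b * (INR D - INR p) * g p.
Definition fock_dot (D : nat) (f g : nat -> R) : R :=
  sum_n (fun p => INR (fact p) * INR (fact (D - p)) * f p * g p) D.

Lemma pow_lin_S a b n : pow_lin a b (S n) = mul_lin a b (pow_lin a b n).
Proof.
  apply functional_extensionality; intros [|p]; unfold mul_lin, pow_lin, mulX.
  - simpl; rewrite !C_n_0, Nat.sub_0_r; ring.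
  - destruct (Nat.leb_spec (S p) (S n)), (Nat.leb_spec p n), (Nat.leb_spec (S p) n); try lia; try ring.
    + rewrite <- pascal by lia.
      replace (n - p)%nat with (S (n - S p)) by lia; replace (S n - S p)%nat with (S (n - S p)) by lia.
      simpl; ring.
    + replace p with n by lia; rewrite !C_n_n, !Nat.sub_diag; simpl; ring.
Qed.

Lemma conv_mul_lin_l a b f g : conv (mul_lin a b f) g = mul_lin a b (conv f g).
Proof.
  apply functional_extensionality; intros [|p]; unfold conv, mul_lin.
  - rewrite !sum_O; simpl; ring.
  - rewrite (sum_n_ext_R _ (fun i => a * (mulX f i * g (S p - i)%nat) + b * (f i * g (S p - i)%nat)))
      by (intros; ring).
    rewrite sum_n_Rplus, !sum_n_Rmult_l, (sum_n_Sn_l (fun i => mulX f i * g (S p - i)%nat)).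
    simpl mulX; rewrite Rmult_0_l, Rplus_0_l; reflexivity.
Qed.

Lemma conv_mul_lin_r a b f g : conv f (mul_lin a b g) = mul_lin a b (conv f g).
Proof.
  apply functional_extensionality; intros [|p]; unfold conv, mul_lin.
  - rewrite !sum_O; simpl; ring.
  - rewrite (sum_n_ext_R _ (fun i => a * (f i * mulX g (S p - i)%nat) + b * (f i * g (S p - i)%nat)))
      by (intros; ring).
    rewrite sum_n_Rplus, !sum_n_Rmult_l, (sum_n_Sn (fun i => f i * mulX g (S p - i)%nat)), Nat.sub_diag.
    rewrite (sum_n_ext_loc_R (fun i => f i * mulX g (S p - i)%nat) (fun i => f i * g (p - i)%nat))
      by (intros i Hi; now replace (S p - i)%nat with (S (p - i)) by lia).
    simpl mulX; rewrite Rmult_0_r, Rplus_0_r; reflexivity.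
Qed.

Lemma bs_poly_S_l s t n m : bs_poly s t (S n) m = mul_lin s t (bs_poly s t n m).
Proof. unfold bs_poly; rewrite pow_lin_S; apply conv_mul_lin_l. Qed.

Lemma bs_poly_S_r s t n m : bs_poly s t n (S m) = mul_lin (- t) s (bs_poly s t n m).
Proof. unfold bs_poly; rewrite pow_lin_S; apply conv_mul_lin_r. Qed.

Lemma bs_poly_0_0 s t : bs_poly s t 0 0 = delta0.
Proof.
  apply functional_extensionality; intros p; unfold bs_poly, conv.
  rewrite (sum_n_single _ 0%nat) by (intros [|i] Hi; [easy|unfold pow_lin; simpl; ring]).
  unfold pow_lin, delta0; rewrite Nat.sub_0_r, C_n_0.
  destruct p; simpl; [rewrite C_n_0|]; ring.
Qed.

Lemma bs_poly_deg s t n m p : (n + m < p)%nat -> bs_poly s t n m p = 0.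
Proof.
  intros Hp; unfold bs_poly, conv, pow_lin; apply sum_n_zero; intros i _.
  destruct (Nat.leb_spec i n), (Nat.leb_spec (p - i) m); try lia; ring.
Qed.

Lemma lin_adj_mul_lin a b c d D f p :
  lin_adj a b (S D) (mul_lin c d f) p = (a * c + b * d) * f p + mul_lin c d (lin_adj a b D f) p.
Proof. unfold lin_adj, mul_lin, mulX; destruct p; rewrite ?S_INR; simpl; ring. Qed.

Lemma fock_dot_mul_lin a b D f g : f (S D) = 0 ->
  fock_dot (S D) (mul_lin a b f) g = fock_dot D f (lin_adj a b (S D) g).
Proof.
  intros Hf; unfold fock_dot, mul_lin, lin_adj.
  set (F := fun p => INR (fact p) * INR (fact (S D - p))).
  rewrite (sum_n_ext_R _ (fun p => a * (F p * mulX f p * g p) + b * (F p * f p * g p)))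
    by (intros; unfold F; ring).
  symmetry; rewrite (sum_n_ext_loc_R _ (fun p => a * (F (S p) * f p * g (S p)) + b * (F p * f p * g p))).
  - rewrite !sum_n_Rplus, !sum_n_Rmult_l, sum_n_Sn_l, (sum_n_Sn (fun p => F p * f p * g p)), Hf.
    simpl mulX; ring.
  - intros p Hp; unfold F; replace (S D - S p)%nat with (D - p)%nat by lia.
    replace (S D - p)%nat with (S (D - p)) by lia.
    rewrite !fact_simpl, !mult_INR, !S_INR, minus_INR by lia; ring.
Qed.

Lemma fock_dot_scal_r D f g c : fock_dot D f (fun p => c * g p) = c * fock_dot D f g.
Proof. unfold fock_dot; rewrite <- sum_n_Rmult_l; apply sum_n_ext_R; intros; ring. Qed.

Section BeamSplitterPolynomials.

Variables s t : R.
Hypothesis s2_t2 : s * s + t * t = 1.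

Lemma lin_adj_bs_poly_0 m p : lin_adj (- t) s m (bs_poly s t 0 m) p = INR m * bs_poly s t 0 (m - 1) p.
Proof.
  revert p; induction m as [|m IH]; intros p.
  - rewrite bs_poly_0_0; unfold lin_adj, delta0; destruct p; simpl; ring.
  - rewrite bs_poly_S_r, lin_adj_mul_lin.
    assert (E : mul_lin (- t) s (lin_adj (- t) s m (bs_poly s t 0 m)) p
                = INR m * mul_lin (- t) s (bs_poly s t 0 (m - 1)) p)
      by (unfold mul_lin, mulX; destruct p; rewrite ?IH; ring).
    rewrite E; destruct m as [|m]; [simpl; rewrite <- s2_t2; ring|].
    replace (S (S m) - 1)%nat with (S m) by lia; replace (S m - 1)%nat with m by lia.
    rewrite <- bs_poly_S_r, (S_INR (S m)), <- s2_t2; ring.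
Qed.

Lemma lin_adj_bs_poly n m p : lin_adj s t (n + m) (bs_poly s t n m) p = INR n * bs_poly s t (n - 1) m p.
Proof.
  revert p; induction n as [|n IH]; intros p.
  - simpl; induction m as [|m IHm] in p |- *.
    + rewrite bs_poly_0_0; unfold lin_adj, delta0; destruct p; simpl; ring.
    + rewrite bs_poly_S_r, lin_adj_mul_lin; unfold mul_lin, mulX; destruct p; rewrite ?IHm; ring.
  - change (S n + m)%nat with (S (n + m)); rewrite bs_poly_S_l, lin_adj_mul_lin.
    assert (E : mul_lin s t (lin_adj s t (n + m) (bs_poly s t n m)) p
                = INR n * mul_lin s t (bs_poly s t (n - 1) m) p)
      by (unfold mul_lin, mulX; destruct p; rewrite ?IH; ring).
    rewrite E; destruct n as [|n]; [simpl; rewrite <- s2_t2; ring|].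
    replace (S (S n) - 1)%nat with (S n) by lia; replace (S n - 1)%nat with n by lia.
    rewrite <- bs_poly_S_l, (S_INR (S n)), <- s2_t2; ring.
Qed.

Lemma fock_dot_bs_poly n m :
  fock_dot (n + m) (bs_poly s t n m) (bs_poly s t n m) = INR (fact n) * INR (fact m).
Proof.
  induction n as [|n IHn].
  - induction m as [|m IHm].
    + unfold fock_dot; rewrite sum_O, bs_poly_0_0; unfold delta0; simpl; ring.
    + cbn [Nat.add] in *; rewrite bs_poly_S_r at 1.
      rewrite fock_dot_mul_lin by (apply bs_poly_deg; lia).
      rewrite (functional_extensionality _ _ (lin_adj_bs_poly_0 (S m))), fock_dot_scal_r.
      rewrite Nat.sub_succ, Nat.sub_0_r, IHm, fact_simpl, mult_INR; ring.
  - change (S n + m)%nat with (S (n + m)); rewrite bs_poly_S_l at 1.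
    rewrite fock_dot_mul_lin by (apply bs_poly_deg; lia).
    change (S (n + m)) with (S n + m)%nat.
    rewrite (functional_extensionality _ _ (lin_adj_bs_poly (S n) m)), fock_dot_scal_r.
    rewrite Nat.sub_succ, Nat.sub_0_r, IHn, fact_simpl, mult_INR; ring.
Qed.

End BeamSplitterPolynomials.

Lemma bs_eq_bs_poly eta a q r m : (a + q = r + m)%nat ->
  bs eta a q r m =
  sqrt (INR (fact a * fact q) / INR (fact r * fact m)) * bs_poly (sqrt eta) (sqrt (1 - eta)) r m a.
Proof.
  intros Hq; unfold bs; destruct (Nat.eqb_spec (a + q) (r + m)) as [_|]; [|lia]; f_equal.
  rewrite <- sum_n_Reals; set (s := sqrt eta); set (t := sqrt (1 - eta)).
  set (h := fun i => if (i <=? a)%nat then pow_lin s t r i * pow_lin (- t) s m (a - i) else 0).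
  assert (Hr : forall i, (r < i)%nat -> h i = 0)
    by (intros i Hi; unfold h, pow_lin; destruct (Nat.leb_spec i r); [lia|destruct (i <=? a)%nat; ring]).
  assert (Ha : forall i, (a < i)%nat -> h i = 0)
    by (intros i Hi; unfold h; destruct (Nat.leb_spec i a); [lia|ring]).
  transitivity (sum_n h r).
  - apply sum_n_ext_loc_R; intros i Hi; unfold h, pow_lin, binom.
    destruct (Nat.leb_spec i r); [|lia].
    destruct (Nat.leb_spec i a), (Nat.leb_spec (a - i) m); simpl; try ring.
    replace (- t) with (-1 * t) by ring; rewrite Rpow_mult_distr, !pow_add; unfold Binomial.C; ring.
  - rewrite <- (sum_n_support_le h r (r + a)), (sum_n_support_le h a (r + a)) by (auto || lia).
    apply sum_n_ext_loc_R; intros i Hi; unfold h; destruct (Nat.leb_spec i a); [reflexivity|lia].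
Qed.

Lemma sum_n_bs_sq eta r M : 0 <= eta <= 1 -> (r <= M)%nat ->
  sum_n (fun a => bs eta a (M - a) r (M - r) ^ 2) M = 1 :> R.
Proof.
  intros Heta Hr; set (c := bs_poly (sqrt eta) (sqrt (1 - eta)) r (M - r)).
  assert (Hfact : forall k, 0 < INR (fact k)) by (intros; apply INR_fact_lt_0).
  assert (Hnorm : fock_dot M c c = INR (fact r) * INR (fact (M - r))).
  { replace M with (r + (M - r))%nat at 1 by lia; apply fock_dot_bs_poly.
    rewrite !sqrt_sqrt by lra; ring. }
  rewrite (sum_n_ext_loc_R _ (fun a => / (INR (fact r) * INR (fact (M - r)))
                                      * (INR (fact a) * INR (fact (M - a)) * c a * c a))).
  - rewrite sum_n_Rmult_l; change (sum_n _ M) with (fock_dot M c c); rewrite Hnorm.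
    field; split; apply Rgt_not_eq, Hfact.
  - intros a Ha; rewrite bs_eq_bs_poly by lia; fold c.
    rewrite Rpow_mult_distr, pow2_sqrt, !mult_INR; [field; split; apply Rgt_not_eq, Hfact|].
    apply Rdiv_le_0_compat; [apply pos_INR|].
    rewrite mult_INR; apply Rmult_lt_0_compat; apply Hfact.
Qed.

Definition thermal_prob (nB : R) (k : nat) : R := nB ^ k / (1 + nB) ^ (k + 1).

Lemma thermal_ratio_bounds nB : 0 <= nB -> 0 <= nB / (1 + nB) < 1.
Proof.
  intros HnB; split; [apply Rdiv_le_0_compat; lra|].
  apply Rmult_lt_reg_r with (1 + nB); [lra|].
  unfold Rdiv; rewrite Rmult_assoc, Rinv_l by lra; lra.
Qed.

Lemma thermal_prob_geom nB k : 0 <= nB -> thermal_prob nB k = / (1 + nB) * (nB / (1 + nB)) ^ k.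
Proof.
  intros HnB; unfold thermal_prob, Rdiv; rewrite Rpow_mult_distr, pow_inv, pow_add; simpl.
  field; split; [apply pow_nonzero|]; lra.
Qed.

Lemma thermal_prob_nonneg nB k : 0 <= nB -> 0 <= thermal_prob nB k.
Proof. intros HnB; apply Rdiv_le_0_compat; [apply pow_le | apply pow_lt]; lra. Qed.

Lemma is_series_thermal_prob nB : 0 <= nB -> is_series (thermal_prob nB) 1.
Proof.
  intros HnB; pose proof (thermal_ratio_bounds nB HnB) as Hx.
  apply (is_series_ext_R (fun k => / (1 + nB) * (nB / (1 + nB)) ^ k));
    [intros; symmetry; apply thermal_prob_geom; exact HnB|].
  enough (H : forall l, l = / (1 + nB) * / (1 - nB / (1 + nB)) ->
                       is_series (fun k => / (1 + nB) * (nB / (1 + nB)) ^ k) l)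
    by (apply H; field; lra).
  intros l ->; apply (is_series_scal_l (/ (1 + nB)) (fun k => (nB / (1 + nB)) ^ k)).
  apply is_series_geom; rewrite Rabs_right; lra.
Qed.

Lemma sum_n_binomial_diag r n :
  sum_n (fun k => Binomial.C (r + k) r) n = Binomial.C (S r + n) (S r) :> R.
Proof.
  induction n as [|n IH].
  - rewrite sum_O, !Nat.add_0_r, !C_n_n; reflexivity.
  - rewrite sum_n_Sn, IH; replace (S r + S n)%nat with (S (r + S n)) by lia.
    rewrite <- pascal by lia; cbn [Nat.add]; rewrite Nat.add_succ_r; ring.
Qed.

Lemma is_series_neg_binomial y r : 0 <= y < 1 ->
  is_series (fun k => Binomial.C (r + k) r * y ^ k) (/ (1 - y) ^ S r).
Proof.
  intros Hy; assert (Hgeom : is_series (fun k => y ^ k) (/ (1 - y)))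
    by (apply is_series_geom; rewrite Rabs_right; lra).
  assert (HC : forall n k, 0 <= Binomial.C n k)
    by (intros; apply Rdiv_le_0_compat; [apply pos_INR|apply Rmult_lt_0_compat; apply INR_fact_lt_0]).
  induction r as [|r IH].
  - apply (is_series_ext_R (fun k => y ^ k)); [intros; rewrite C_n_0; ring|].
    simpl; rewrite Rmult_1_r; exact Hgeom.
  - replace (/ (1 - y) ^ S (S r)) with (/ (1 - y) ^ S r * / (1 - y))
      by (simpl; field; split; [apply pow_nonzero|]; lra).
    apply (is_series_ext_R (fun n => sum_f_R0 (fun k => Binomial.C (r + k) r * y ^ k * y ^ (n - k)) n)).
    + intros n; rewrite <- sum_n_Reals.
      rewrite (sum_n_ext_loc_R _ (fun k => y ^ n * Binomial.C (r + k) r))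
        by (intros k Hk; rewrite Rmult_assoc, <- pow_add; replace (k + (n - k))%nat with n by lia; ring).
      rewrite sum_n_Rmult_l, sum_n_binomial_diag; ring.
    + apply is_series_mult_pos; auto.
      * intros; apply Rmult_le_pos; [apply HC | apply pow_le; lra].
      * intros; apply pow_le; lra.
Qed.

Definition bs_out_prob (eta nB : R) (r a e : nat) : R :=
  if (r <=? a + e)%nat then bs eta a e r (a + e - r) ^ 2 * thermal_prob nB (a + e - r) else 0.

Definition vac_prob (eta nB : R) (r : nat) : R :=
  ((1 - eta) * (1 + nB) / (1 + (1 - eta) * nB)) ^ r / (1 + (1 - eta) * nB).

Lemma bs_out_prob_nonneg eta nB r a e : 0 <= nB -> 0 <= bs_out_prob eta nB r a e.
Proof.
  intros HnB; unfold bs_out_prob; destruct (r <=? a + e)%nat; [|lra].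
  apply Rmult_le_pos; [apply pow2_ge_0 | apply thermal_prob_nonneg, HnB].
Qed.

Lemma antidiag_sum_bs_out_prob eta nB r M : 0 <= eta <= 1 ->
  antidiag_sum (bs_out_prob eta nB r) M = if (r <=? M)%nat then thermal_prob nB (M - r) else 0.
Proof.
  intros Heta; unfold antidiag_sum, bs_out_prob.
  rewrite (sum_n_ext_loc_R _ (fun a => if (r <=? M)%nat
                                        then thermal_prob nB (M - r) * bs eta a (M - a) r (M - r) ^ 2
                                        else 0))
    by (intros a Ha; replace (a + (M - a))%nat with M by lia; destruct (r <=? M)%nat; ring).
  destruct (Nat.leb_spec r M).
  - rewrite sum_n_Rmult_l, sum_n_bs_sq by auto; ring.
  - now apply sum_n_zero.
Qed.

Lemma bs_poly_at_0 s t n m : bs_poly s t n m 0 = t ^ n * s ^ m.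
Proof. unfold bs_poly, conv, pow_lin; rewrite sum_O; simpl; rewrite !C_n_0, !Nat.sub_0_r; ring. Qed.

Lemma bs_sq_to_environment eta r e : 0 <= eta <= 1 -> (r <= e)%nat ->
  bs eta 0 e r (e - r) ^ 2 = Binomial.C e r * (1 - eta) ^ r * eta ^ (e - r).
Proof.
  intros Heta Hr; rewrite bs_eq_bs_poly by lia; rewrite bs_poly_at_0.
  assert (Hsq : forall y k, 0 <= y -> (sqrt y ^ k) ^ 2 = y ^ k)
    by (intros; rewrite <- pow_mult, Nat.mul_comm, pow_mult, pow2_sqrt; auto).
  assert (Hfrac : 0 <= INR (fact 0 * fact e) / INR (fact r * fact (e - r))).
  { apply Rdiv_le_0_compat; [apply pos_INR|apply lt_0_INR].
    pose proof (lt_O_fact r); pose proof (lt_O_fact (e - r)); lia. }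
  rewrite !Rpow_mult_distr, pow2_sqrt, !Hsq by lra.
  unfold Binomial.C; rewrite !mult_INR; simpl; field; split; apply INR_fact_neq_0.
Qed.

Lemma is_series_bs_out_prob_vacuum eta nB r : 0 <= eta <= 1 -> 0 <= nB ->
  is_series (bs_out_prob eta nB r 0) (vac_prob eta nB r).
Proof.
  intros Heta HnB; set (x := nB / (1 + nB)).
  pose proof (thermal_ratio_bounds nB HnB) as Hx; fold x in Hx.
  assert (Hetax : 0 <= eta * x < 1)
    by (split; [apply Rmult_le_pos|apply Rle_lt_trans with x; [rewrite <- (Rmult_1_l x) at 2; apply Rmult_le_compat_r|]]; lra).
  set (v := fun k => (1 - eta) ^ r * / (1 + nB) * (Binomial.C (r + k) r * (eta * x) ^ k)).
  apply (is_series_ext_R (fun e => if (r <=? e)%nat then v (e - r)%nat else 0)).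
  - intros e; unfold bs_out_prob; cbn [Nat.add]; destruct (Nat.leb_spec r e); [|reflexivity].
    rewrite bs_sq_to_environment, thermal_prob_geom by auto; fold x; unfold v.
    replace (r + (e - r))%nat with e by lia; rewrite Rpow_mult_distr; ring.
  - replace (vac_prob eta nB r) with ((1 - eta) ^ r * / (1 + nB) * / (1 - eta * x) ^ S r).
    + apply is_series_shift, (is_series_scal_l ((1 - eta) ^ r * / (1 + nB))
                                (fun k => Binomial.C (r + k) r * (eta * x) ^ k)).
      now apply is_series_neg_binomial.
    + assert (HN : 0 < 1 + (1 - eta) * nB) by nra.
      assert (E : 1 - eta * x = (1 + (1 - eta) * nB) / (1 + nB)) by (unfold x; field; lra).
      unfold vac_prob; rewrite E; unfold Rdiv; rewrite !Rpow_mult_distr, !pow_inv; simpl pow.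
      field; repeat split; try apply pow_nonzero; lra.
Qed.

Lemma is_series_bs_out_click eta nB r : 0 <= eta <= 1 -> 0 <= nB ->
  is_series (fun a => if (1 <=? a)%nat then Series (bs_out_prob eta nB r a) else 0)
            (1 - vac_prob eta nB r).
Proof.
  intros Heta HnB.
  assert (Hrows : is_series (fun a => Series (bs_out_prob eta nB r a)) 1).
  { apply is_series_rows; [intros; apply bs_out_prob_nonneg, HnB|].
    apply (is_series_ext_R (fun M => if (r <=? M)%nat then thermal_prob nB (M - r) else 0)).
    - intros M; symmetry; apply antidiag_sum_bs_out_prob, Heta.
    - apply is_series_shift, is_series_thermal_prob, HnB. }
  replace (vac_prob eta nB r) with (Series (bs_out_prob eta nB r 0))
    by (apply is_series_unique, is_series_bs_out_prob_vacuum; auto).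
  exact (is_series_tail _ _ Hrows).
Qed.

Lemma tmsv_amp_sq ns r : 0 < ns -> tmsv_amp ns r * tmsv_amp ns r = thermal_prob ns r.
Proof. intros Hns; apply sqrt_sqrt, thermal_prob_nonneg; lra. Qed.

Lemma reduced_R_diag ns r : 0 < ns -> reduced_R ns r r = thermal_prob ns r.
Proof.
  intros Hns; rewrite <- tmsv_amp_sq by exact Hns; apply is_series_unique.
  replace (tmsv_amp ns r * tmsv_amp ns r) with (tmsv ns r r r r)
    by (unfold tmsv; now rewrite Nat.eqb_refl).
  apply (is_series_single (fun a => tmsv ns r a r a)); intros a Ha.
  unfold tmsv; destruct (Nat.eqb_spec r a); [lia|ring].
Qed.

Lemma apply_bs_init_H0_diag ns eta nB r a e : 0 < ns ->
  apply_bs eta (init_H0 ns nB) r a e r a e = thermal_prob ns r * bs_out_prob eta nB 0 a e.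
Proof.
  intros Hns; unfold apply_bs, init_H0; rewrite <- sum_n_Reals.
  rewrite (sum_n_single _ 0%nat); cbn [Nat.leb].
  - rewrite <- sum_n_Reals, (sum_n_single _ 0%nat); cbn [Nat.leb].
    + rewrite !Nat.sub_0_r, reduced_R_diag by exact Hns.
      unfold bs_out_prob, vac, thermal, thermal_prob; rewrite !Nat.eqb_refl; simpl.
      rewrite !Nat.sub_0_r; ring.
    + intros i Hi; unfold vac; destruct (Nat.eqb_spec i 0); [lia|]; simpl; ring.
  - intros i Hi; rewrite <- sum_n_Reals; apply sum_n_zero; intros j _; unfold vac.
    destruct (Nat.eqb_spec i 0); [lia|]; simpl; ring.
Qed.

Lemma apply_bs_init_H1_diag ns eta nB r a e : 0 < ns ->
  apply_bs eta (init_H1 ns nB) r a e r a e = thermal_prob ns r * bs_out_prob eta nB r a e.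
Proof.
  intros Hns; unfold apply_bs, init_H1; rewrite <- sum_n_Reals.
  rewrite (sum_n_single _ r).
  - unfold bs_out_prob; destruct (Nat.leb_spec r (a + e)); [|ring].
    rewrite <- sum_n_Reals, (sum_n_single _ r).
    + destruct (Nat.leb_spec r (a + e)); [|lia].
      unfold tmsv, thermal; rewrite !Nat.eqb_refl, <- tmsv_amp_sq by exact Hns.
      unfold thermal_prob; ring.
    + intros i Hi; unfold tmsv; destruct (Nat.eqb_spec r i); [lia|ring].
  - intros i Hi; rewrite <- sum_n_Reals; apply sum_n_zero; intros j _; unfold tmsv.
    destruct (Nat.eqb_spec r i); [lia|ring].
Qed.

Lemma p_CC_thermal_mixture ns eta nB (rho : Op3) (k : nat -> nat) : 0 <= eta <= 1 -> 0 <= nB ->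
  (forall r a e, rho r a e r a e = thermal_prob ns r * bs_out_prob eta nB (k r) a e) ->
  p_CC rho = Series (fun r => if (1 <=? r)%nat then thermal_prob ns r * (1 - vac_prob eta nB (k r)) else 0).
Proof.
  intros Heta HnB Hdiag; unfold p_CC; apply Series_ext; intros r.
  rewrite (Series_ext _ (fun a => if (1 <=? r)%nat
                                  then thermal_prob ns r * (if (1 <=? a)%nat then Series (bs_out_prob eta nB (k r) a) else 0)
                                  else 0)).
  - destruct (1 <=? r)%nat; [|apply (Series_if false (fun _ => 0))].
    rewrite Series_scal_l; f_equal; apply is_series_unique, is_series_bs_out_click; auto.
  - intros a; rewrite (Series_ext _ (fun e => if andb (1 <=? r)%nat (1 <=? a)%nat
                                             then thermal_prob ns r * bs_out_prob eta nB (k r) a e else 0))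
      by (intros e; now rewrite Hdiag).
    rewrite Series_if; destruct (1 <=? r)%nat, (1 <=? a)%nat; simpl; rewrite ?Series_scal_l; ring.
Qed.

Lemma vac_prob_0 eta nB : 0 <= eta <= 1 -> 0 <= nB ->
  vac_prob eta nB 0 = 1 / (1 + (1 - eta) * nB).
Proof. intros; unfold vac_prob; simpl; field; nra. Qed.

Lemma vac_prob_1 eta nB : 0 <= eta <= 1 -> 0 <= nB ->
  1 - vac_prob eta nB 1 = 1 - 1 / (1 + (1 - eta) * nB) + eta / (1 + (1 - eta) * nB) ^ 2.
Proof. intros; unfold vac_prob; simpl; field; nra. Qed.

Lemma vac_prob_antitone eta nB r : 0 <= eta <= 1 -> 0 <= nB -> (1 <= r)%nat ->
  0 <= vac_prob eta nB r <= vac_prob eta nB 1 /\ vac_prob eta nB 1 <= 1.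
Proof.
  intros Heta HnB Hr; set (N := (1 - eta) * nB).
  assert (HN : 0 <= N) by (unfold N; nra).
  set (rho := (1 - eta) * (1 + nB) / (1 + N)).
  assert (Hrho : 0 <= rho <= 1).
  { unfold rho; split; [apply Rdiv_le_0_compat; nra|].
    apply Rmult_le_reg_r with (1 + N); [lra|].
    unfold Rdiv; rewrite Rmult_assoc, Rinv_l by lra; unfold N; nra. }
  assert (Hc : 0 < / (1 + N) <= 1)
    by (split; [apply Rinv_0_lt_compat; lra|rewrite <- Rinv_1; apply Rinv_le_contravar; lra]).
  assert (Hpow : 0 <= rho ^ r <= rho).
  { destruct r as [|r]; [lia|]; simpl.
    assert (rho ^ r <= 1) by (rewrite <- (pow1 r); apply pow_incr; lra).
    pose proof (pow_le rho r (proj1 Hrho)); nra. }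
  unfold vac_prob; fold N; fold rho; unfold Rdiv; simpl pow; nra.
Qed.

Lemma is_series_thermal_clicks ns : 0 <= ns ->
  is_series (fun r => if (1 <=? r)%nat then thermal_prob ns r else 0) (1 - 1 / (1 + ns)).
Proof.
  intros Hns; replace (1 / (1 + ns)) with (thermal_prob ns 0) by (unfold thermal_prob; simpl; field; lra).
  apply is_series_tail, is_series_thermal_prob, Hns.
Qed.

Lemma Series_thermal_clicks_const ns c : 0 <= ns ->
  Series (fun r => if (1 <=? r)%nat then thermal_prob ns r * c else 0) = (1 - 1 / (1 + ns)) * c.
Proof.
  intros Hns; rewrite (Series_ext _ (fun r => c * (if (1 <=? r)%nat then thermal_prob ns r else 0)))
    by (intros r; destruct (1 <=? r)%nat; ring).
  rewrite Series_scal_l; erewrite is_series_unique by exact (is_series_thermal_clicks ns Hns); ring.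
Qed.

Lemma Series_thermal_clicks_ge ns (g : nat -> R) c : 0 <= ns -> 0 <= c ->
  (forall r, (1 <= r)%nat -> c <= g r <= 1) ->
  (1 - 1 / (1 + ns)) * c <= Series (fun r => if (1 <=? r)%nat then thermal_prob ns r * g r else 0).
Proof.
  intros Hns Hc Hg; rewrite <- Series_thermal_clicks_const by exact Hns.
  apply Series_le.
  - intros r; destruct (Nat.leb_spec 1 r) as [Hr|]; [|lra].
    pose proof (thermal_prob_nonneg ns r Hns); specialize (Hg r Hr).
    split; [apply Rmult_le_pos|apply Rmult_le_compat_l]; lra.
  - apply (ex_series_bounded _ 1).
    + intros r; destruct (Nat.leb_spec 1 r) as [Hr|]; [|lra].
      pose proof (thermal_prob_nonneg ns r Hns); specialize (Hg r Hr); nra.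
    + intros n; apply Rle_trans with (sum_n (thermal_prob ns) n).
      * apply sum_n_le; intros r _; destruct (Nat.leb_spec 1 r) as [Hr|];
          pose proof (thermal_prob_nonneg ns r Hns); [specialize (Hg r Hr); nra|lra].
      * apply is_series_partial_le; [intros; apply thermal_prob_nonneg, Hns|].
        apply is_series_thermal_prob, Hns.
Qed.

Theorem mainTheorem4 (ns eta nB : R)
  (Hns : 0 < ns) (Heta0 : 0 <= eta) (Heta1 : eta <= 1) (HnB : 0 <= nB) :
  let N := (1 - eta) * nB in
  p_CC (apply_bs eta (init_H0 ns nB)) = (1 - 1 / (1 + ns)) * (1 - 1 / (1 + N)) /\
  p_CC (apply_bs eta (init_H1 ns nB)) >=
    (1 - 1 / (1 + ns)) * (1 - 1 / (1 + N) + eta / (1 + N) ^ 2).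
Proof.
  intros N; subst N; assert (Heta : 0 <= eta <= 1) by lra; split.
  - rewrite (p_CC_thermal_mixture ns eta nB _ (fun _ => 0%nat)), Series_thermal_clicks_const, vac_prob_0;
      auto; [lra | intros; apply apply_bs_init_H0_diag, Hns].
  - rewrite (p_CC_thermal_mixture ns eta nB _ (fun r => r)), <- vac_prob_1;
      auto; [|intros; apply apply_bs_init_H1_diag, Hns].
    apply Rle_ge, Series_thermal_clicks_ge; [lra| |].
    + pose proof (vac_prob_antitone eta nB 1 Heta HnB (le_n 1)); lra.
    + intros r Hr; pose proof (vac_prob_antitone eta nB r Heta HnB Hr); lra.
Qed.
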